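(* Let $A$ be a unital power-associative algebra over a field $F$ (of any characteristic) which is algebraic, and let $R$ be a Rota–Baxter operator of weight zero on $A$. Then $R(1)$ is nilpotent.
   Context: A linear operator $R$ on $A$ is a Rota–Baxter operator of weight $0$ if $R(x)R(y)=R(R(x)y+xR(y))$ for all $x,y\in A$. Power-associative: every element generates an associative subalgebra. Algebraic: every element satisfies a nonzero polynomial equation over $F$. *)

(* Nonassociative algebras are not in MathComp, so an
   F-algebra is represented as an F-vector space V (lmodType F) with a
   bilinear multiplication [mul] and a unit [one]. *)
From HB Require Import structures.
From mathcomp Require Import all_boot all_order all_algebra.
Set Implicit Arguments. Unset Strict Implicit. Unset Printing Implicit Defensive.
Import GRing.Theory.
Local Open Scope ring_scope.

Section NonassocAlg.
Variables (F : fieldType) (V : lmodType F) (mul : V -> V -> V) (one : V).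

Definition bilinear_mul : Prop :=
  (forall x, linear (mul x)) /\ (forall y, linear (fun x => mul x y)).

Definition is_unit_elt : Prop :=
  forall x, mul one x = x /\ mul x one = x.

Inductive gen_subalg (x : V) : V -> Prop :=
  | gen_self : gen_subalg x x
  | gen_zero : gen_subalg x 0
  | gen_add a b : gen_subalg x a -> gen_subalg x b -> gen_subalg x (a + b)
  | gen_scale (c : F) a : gen_subalg x a -> gen_subalg x (c *: a)
  | gen_mul a b : gen_subalg x a -> gen_subalg x b -> gen_subalg x (mul a b).

Definition power_associative : Prop :=
  forall x a b c, gen_subalg x a -> gen_subalg x b -> gen_subalg x c ->
    mul (mul a b) c = mul a (mul b c).

(* powers x^0 = 1, x^(n+1) = x * x^n (well defined by power-associativity) *)
Fixpoint apow (x : V) (n : nat) : V :=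
  match n with O => one | S m => mul x (apow x m) end.

Definition aeval (p : {poly F}) (x : V) : V :=
  \sum_(i < size p) p`_i *: apow x i.

Definition algebraic_alg : Prop :=
  forall x, exists2 p : {poly F}, p != 0 & aeval p x = 0.

Definition rota_baxter0 (R : V -> V) : Prop :=
  forall x y, mul (R x) (R y) = R (mul (R x) y + mul x (R y)).

Definition anilpotent (x : V) : Prop := exists n : nat, apow x n = 0.

End NonassocAlg.

(* Write e_n := R^n(1).  The weight-zero Rota-Baxter identity and induction on
   a + b give e_a e_b = C(a+b, a) e_(a+b), hence R(1)^n = n! e_n.  An algebraic
   relation sum_i p_i R(1)^i = 0 becomes a linear relation sum_i c_i e_(k+i) = 0
   with c_i = p_i i!.  Applying R and multiplying by e_1 = R(1) gives two
   relations among the e_(k+i+1); a suitable combination kills the lowest term,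
   leaving a shorter relation whose leading coefficient is multiplied by the
   degree.  Descending to a single term e_k = 0 (or meeting an n with n! = 0 in
   F) forces R(1)^n = 0. *)
From HB Require Import structures.
From mathcomp Require Import all_boot all_order all_algebra.
Import GRing.Theory.
Local Open Scope ring_scope.

Set Implicit Arguments.
Unset Strict Implicit.

Section RotaBaxterUnit.
Variables (F : fieldType) (V : lmodType F) (mul : V -> V -> V) (one : V).
Variable R : {linear V -> V}.
Hypothesis mul_linear : forall x, linear (mul x).
Hypothesis one_unit : is_unit_elt mul one.
Hypothesis R_rota_baxter : rota_baxter0 mul R.

Let lmul (x : V) : {linear V -> V} :=
  HB.pack (mul x) (GRing.isLinear.Build F V V *:%R (mul x) (mul_linear x)).
Let mulx0 x : mul x 0 = 0 := linear0 (lmul x).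
Let mulxZ x a v : mul x (a *: v) = a *: mul x v := linearZZ (lmul x) a v.
Let mulx_sum x n (v : 'I_n -> V) :
  mul x (\sum_(i < n) v i) = \sum_(i < n) mul x (v i) := linear_sum (lmul x) _ _ _.

Definition iterR1 (n : nat) : V := iter n R one.

Lemma mul_iterR1 a b :
  mul (iterR1 a) (iterR1 b) = 'C(a + b, a)%:R *: iterR1 (a + b).
Proof.
move Hn : (a + b)%N => n; elim: n a b Hn => [|n IHn] a b Hn.
  move/eqP: Hn; rewrite addn_eq0 => /andP[/eqP-> /eqP->].
  by rewrite -[iterR1 0]/one (proj1 (one_unit _)) scale1r.
case: a Hn => [|a] Hn.
  by rewrite -Hn add0n bin0 scale1r -[iterR1 0]/one (proj1 (one_unit _)).
case: b Hn => [|b] Hn.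
  by rewrite -Hn addn0 binn scale1r -[iterR1 0]/one (proj2 (one_unit _)).
move: Hn; rewrite addSn => -[Hn].
rewrite R_rota_baxter -[R (iterR1 a)]/(iterR1 a.+1) -[R (iterR1 b)]/(iterR1 b.+1).
rewrite (IHn a.+1 b) ?addSn -?addnS // (IHn a b.+1) //.
by rewrite -scalerDl -natrD linearZ binS addnC.
Qed.

Lemma apow_R1 n : apow mul one (R one) n = n`!%:R *: iterR1 n.
Proof.
elim: n => [|n IHn] /=; first by rewrite scale1r.
rewrite IHn mulxZ -[R one]/(iterR1 1) mul_iterR1.
by rewrite bin1 scalerA -natrM factS mulnC.
Qed.

Lemma anilpotent_R1_of_fact n : n`!%:R = 0 :> F -> anilpotent mul one (R one).
Proof. by move=> Hn; exists n; rewrite apow_R1 Hn scale0r. Qed.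

(* Applying R and multiplying by e_1 give the relations with coefficients c_i
   and c_i (k + i + 1); subtracting (k + 1) times the first leaves c_i i. *)
Lemma iterR1_relation_shift k w (c : nat -> F) :
  \sum_(i < w.+2) c i *: iterR1 (k + i) = 0 ->
  \sum_(i < w.+1) (c i.+1 * i.+1%:R) *: iterR1 (k.+2 + i) = 0.
Proof.
move=> Hrel.
have HR : \sum_(i < w.+2) c i *: iterR1 (k + i).+1 = 0.
  have := congr1 R Hrel; rewrite linear0 linear_sum => HRrel; rewrite -[RHS]HRrel.
  by apply: eq_bigr => i _; rewrite linearZ.
have HRmul : \sum_(i < w.+2) (c i * (k + i).+1%:R) *: iterR1 (k + i).+1 = 0.
  have := congr1 (mul (iterR1 1)) Hrel; rewrite mulx0 mulx_sum => Hmul; rewrite -[RHS]Hmul.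
  by apply: eq_bigr => i _; rewrite mulxZ mul_iterR1 scalerA add1n bin1.
have Hdiff : \sum_(i < w.+2) (c i * i%:R) *: iterR1 (k + i).+1 = 0.
  suff -> : \sum_(i < w.+2) (c i * i%:R) *: iterR1 (k + i).+1 =
      \sum_(i < w.+2) (c i * (k + i).+1%:R) *: iterR1 (k + i).+1
      - k.+1%:R *: \sum_(i < w.+2) c i *: iterR1 (k + i).+1.
    by rewrite HR HRmul scaler0 subr0.
  rewrite scaler_sumr -sumrB; apply: eq_bigr => i _.
  rewrite scalerA -scalerBl; congr (_ *: _).
  by rewrite -addSn natrD mulrDr [k.+1%:R * _]mulrC addrAC subrr add0r.
rewrite -[RHS]Hdiff [RHS]big_ord_recl mulr0 scale0r add0r.
by apply: eq_bigr => i _; rewrite addnS addSn.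
Qed.

Lemma anilpotent_R1_of_relation w k (c : nat -> F) :
  c w != 0 -> \sum_(i < w.+1) c i *: iterR1 (k + i) = 0 ->
  anilpotent mul one (R one).
Proof.
elim: w k c => [|w IHw] k c Hcw Hrel.
  move: Hrel; rewrite big_ord1 addn0 => /eqP; rewrite scaler_eq0 (negbTE Hcw) /=.
  by move=> /eqP Hk; exists k; rewrite apow_R1 Hk scaler0.
have [|Hfact] := eqVneq (w.+1)`!%:R (0 : F); first exact: anilpotent_R1_of_fact.
apply: (IHw k.+2 (fun i => c i.+1 * i.+1%:R)); last exact: iterR1_relation_shift.
by rewrite mulf_neq0 //; apply: contra Hfact => /eqP Hw; rewrite factS natrM Hw mul0r.
Qed.

End RotaBaxterUnit.

Theorem lemma10 (F : fieldType) (V : lmodType F) (mul : V -> V -> V) (one : V)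
  (Hbil : bilinear_mul mul) (Hone : is_unit_elt mul one)
  (Hpa : power_associative mul) (Halg : algebraic_alg mul one)
  (R : {linear V -> V}) (HR : rota_baxter0 mul R) :
  anilpotent mul one (R one).
Proof.
have [mul_linear _] := Hbil.
have [p p_neq0 p_root] := Halg (R one).
have size_p_gt0 : (0 < size p)%N by rewrite size_poly_gt0.
set w := (size p).-1.
have [|Hfact] := eqVneq w`!%:R (0 : F).
  exact: anilpotent_R1_of_fact mul_linear Hone HR w.
apply: (anilpotent_R1_of_relation mul_linear Hone HR (w := w) (k := 0)
          (c := fun i => p`_i * i`!%:R)).
  by rewrite mulf_neq0 // /w -lead_coefE lead_coef_eq0.
rewrite -[RHS]p_root /aeval /w prednK //; apply: eq_bigr => i _.
by rewrite (apow_R1 mul_linear Hone HR) scalerA add0n.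
Qed.
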